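(* Let $\mathcal F$ be a set of oriented trees which is a complete set of obstructions for a digraph $H$. Then $\mathrm{Sproink}(\mathcal F)=\bigcup_{T\in\mathcal F}\mathrm{Sproink}(T)$ is a complete set of obstructions for the arc graph $\delta H$.
   Context: Digraphs are finite, $G=(V,A)$ with $A\subseteq V\times V$; homomorphisms are arc-preserving vertex maps, $G\to H$ means one exists. A set $\mathcal F$ of digraphs is a complete set of obstructions for $H$ if for every digraph $G$: $G\to H$ iff no $F\in\mathcal F$ satisfies $F\to G$. An oriented tree is a digraph whose underlying undirected graph is a tree. The arc graph of $G=(V,A)$ is $\delta G=(A,\delta A)$ with $\delta A=\{((u,v),(v,w)) : (u,v),(v,w)\in A\}$. A tree $F$ has height at most one if its vertex set is partitioned into two sets $0_F,1_F$ such that every arc $(x,y)$ of $F$ has $x\in 0_F$, $y\in 1_F$ (if $F$ has no arcs, it is a single vertex lying in one of the two sets). Sproinks: let $T$ be an oriented tree. For every vertex $u$ of $T$ choose a tree $F(u)$ of height at most one (with a partition $0_{F(u)},1_{F(u)}$), the $F(u)$ pairwise disjoint. For every arc $e$ of $T$ incident with $u$ fix a vertex $v(e,F(u))$ of $F(u)$ with $v(e,F(u))\in 1_{F(u)}$ if $u$ is the initial vertex of $e$ and $v(e,F(u))\in 0_{F(u)}$ if $u$ is the terminal vertex of $e$. The tree obtained from the disjoint union of all $F(u)$ by identifying $v(e,F(u))$ with $v(e,F(u'))$ for every arc $e=(u,u')$ of $T$ is a sproink of $T$; $\mathrm{Sproink}(T)$ is the set of all sproinks of $T$. *)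

From mathcomp Require Import all_boot.
Set Implicit Arguments. Unset Strict Implicit. Unset Printing Implicit Defensive.

Record digraph := Digraph { dvert : finType; darc : rel dvert }.
Arguments darc : clear implicits.

Definition hom (G H : digraph) : Prop :=
  exists f : dvert G -> dvert H,
    forall x y, darc G x y -> darc H (f x) (f y).

Definition complete_obstructions (Fs : digraph -> Prop) (H : digraph) : Prop :=
  forall G : digraph, hom G H <-> ~ (exists F, Fs F /\ hom F G).

Definition oriented_tree (T : digraph) : Prop :=
  [/\ forall x, ~~ darc T x x,
      forall x y, darc T x y -> ~~ darc T y x,
      0 < #|dvert T|,
      #|[pred p : dvert T * dvert T | darc T p.1 p.2]| = #|dvert T|.-1
    & forall x y, connect [rel a b | darc T a b || darc T b a] x y].

(* Tree of height at most one w.r.t. a partition given by [part]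
   (part x = false : x in 0_F ; part x = true : x in 1_F). *)
Definition height_le1 (F : digraph) (part : dvert F -> bool) : Prop :=
  forall x y, darc F x y -> part x = false /\ part y = true.

Definition arc_vert (H : digraph) : finType :=
  {p : dvert H * dvert H | darc H p.1 p.2}.

Definition arc_graph (H : digraph) : digraph :=
  @Digraph (arc_vert H)
    [rel e f : arc_vert H | (val e).2 == (val f).1].

(* S is a sproink of the oriented tree T: S is (isomorphic to) the quotient
   of the disjoint union of the trees F u (u vertex of T) of height at most
   one, by the equivalence relation generated by identifying
   vout u u' (in F u, a vertex of 1_{F u}) with vin u u' (in F u', a vertex
   of 0_{F u'}) for every arc (u,u') of T. The quotient is given by a
   surjective map q whose fibres are exactly the equivalence classes; arcs of
   S are exactly the images of the arcs of the F u. *)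
Definition is_sproink (T S : digraph) : Prop :=
  exists (F : dvert T -> digraph)
         (part : forall u, dvert (F u) -> bool)
         (vout : forall u u' : dvert T, dvert (F u))
         (vin  : forall u u' : dvert T, dvert (F u')),
  let W := fun u => dvert (F u) in
  let ident : rel {u : dvert T & W u} :=
    fun p q => [exists u, exists u',
      darc T u u' &&
      (((p == Tagged W (vout u u')) && (q == Tagged W (vin u u'))) ||
       ((q == Tagged W (vout u u')) && (p == Tagged W (vin u u'))))] in
  [/\ forall u, oriented_tree (F u) /\ height_le1 (part u),
      forall u u', darc T u u' -> part u (vout u u') = true /\ part u' (vin u u') = false
    & exists q : {u : dvert T & W u} -> dvert S,
      [/\ forall s, exists p, q p = s,
          forall p p', q p = q p' <-> connect ident p p'
        & forall a b, darc S a b <->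
            exists u (x y : W u), darc (F u) x y /\
              q (Tagged W x) = a /\ q (Tagged W y) = b]].

Definition Sproinks (Fs : digraph -> Prop) (S : digraph) : Prop :=
  exists T, Fs T /\ is_sproink T S.

From mathcomp Require Import all_boot.
Set Implicit Arguments. Unset Strict Implicit. Unset Printing Implicit Defensive.

(* The proof is an adjunction argument.  To a digraph G we associate its
   "arc adjoint" D G: every vertex x of G contributes an arc from its tail end
   (x, false) to its head end (x, true), and for each arc x -> y of G the head
   end of x is identified with the tail end of y (the classes of [end_link]).
   Then G -> delta H iff D G -> H (arc_adjunction), so G -> delta H iff no
   T in Fs maps to D G.  It remains to show that T -> D G iff some sproink of
   T maps to G.  A sproink S of T with S -> G sends each tree F u into a single
   link class, which yields T -> D G (sproink_hom_adjoint).  Conversely, from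
   T -> D G we build a sproink whose tree at u is a zigzag path following a
   walk through the link class of the image of u, glued along the witnesses
   of the arcs (adjoint_hom_sproink, via the general gluing lemma
   glued_sproink).  The argument does not use that the obstructions are trees. *)

Lemma connect_invariant (T : finType) (U : Type) (e : rel T) (k : T -> U) :
  (forall a b, e a b -> k a = k b) -> forall a b, connect e a b -> k a = k b.
Proof.
move=> ek a b /connectP [p]; elim: p a => [|c p IH] a /=; first by move=> _ ->.
by case/andP=> /ek -> /IH.
Qed.

Lemma connect_undirected_map (A B : finType) (r : rel A) (e : rel B) (k : A -> B) :
  connect_sym e -> (forall a b, r a b -> connect e (k a) (k b)) ->
  forall a b, connect [rel x y | r x y || r y x] a b -> connect e (k a) (k b).
Proof.
move=> e_sym rk a b /connectP [p]; elim: p a => [|c p IH] a /=; first by move=> _ ->.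
case/andP=> ac cp lst; apply: connect_trans (IH _ cp lst).
by case/orP: ac => [/rk //|/rk]; rewrite e_sym.
Qed.

(* [end_link G] relates the head (x, true) of the arc assigned to a vertex x
   with the tail (y, false) of the arc assigned to y whenever x -> y in G:
   a homomorphism from G to an arc graph must identify these two ends. *)
Definition end_link (G : digraph) : rel (dvert G * bool) := fun a b =>
  (a.2 && ~~ b.2 && darc G a.1 b.1) || (b.2 && ~~ a.2 && darc G b.1 a.1).
Arguments end_link : clear implicits.

Lemma end_link_sym (G : digraph) : symmetric (end_link G).
Proof. by move=> a b; rewrite /end_link orbC. Qed.

Lemma end_link_csym (G : digraph) : connect_sym (end_link G).
Proof. exact/sym_connect_sym/end_link_sym. Qed.

Lemma end_link_side (G : digraph) a b : end_link G a b -> a.2 != b.2.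
Proof. by case/orP=> /andP [/andP [-> /negbTE ->]]. Qed.

Lemma end_link_arc (G : digraph) a b :
  end_link G a b -> a.2 -> ~~ b.2 -> darc G a.1 b.1.
Proof. by case/orP=> /andP [/andP [-> //]]. Qed.

(* Vertices in the same
   link class behave identically, so this is the quotient of the disjoint
   union of the arcs (z, false) -> (z, true) by the links, up to homomorphic
   equivalence; it is the left adjoint of the arc graph construction. *)
Definition end_arc (G : digraph) : rel (dvert G * bool) := fun a b =>
  [exists z, connect (end_link G) a (z, false) && connect (end_link G) b (z, true)].
Arguments end_arc : clear implicits.

Definition arc_adjoint (G : digraph) : digraph := Digraph (end_arc G).

Lemma arc_adjunction (G H : digraph) :
  hom G (arc_graph H) <-> hom (arc_adjoint G) H.
Proof.
split=> [[f fP] | [g gP]].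
- pose k (a : dvert G * bool) := if a.2 then (val (f a.1)).2 else (val (f a.1)).1.
  have k_link a b : end_link G a b -> k a = k b.
    case: a b => [x []] [y []] /orP [] /andP [] //= _ /fP /eqP //.
  exists k => a b /existsP [z /andP [az bz]].
  rewrite (connect_invariant k_link az) (connect_invariant k_link bz).
  exact: (valP (f z)).
- pose r := root (end_link G).
  have rP x : darc H (g (r (x, false))) (g (r (x, true))).
    apply: gP; apply/existsP; exists x.
    by rewrite !(end_link_csym (r _)) !connect_root.
  exists (fun x => exist (fun p => darc H p.1 p.2) (_, _) (rP x)) => x y xy /=.
  apply/eqP; congr g; apply/(rootP (@end_link_csym G)).
  by apply: connect1; rewrite /end_link /= xy.
Qed.

(* In a connected digraph of height at most one mapped homomorphically into G,
   all the ends (g x, ~~ part x) lie in one link class: an arc x -> y has x in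
   0_F and y in 1_F, and its image links (g x, true) with (g y, false). *)
Lemma height1_ends_linked (F G : digraph) (part : dvert F -> bool)
    (g : dvert F -> dvert G) :
  (forall x y, connect [rel a b | darc F a b || darc F b a] x y) ->
  height_le1 part -> (forall x y, darc F x y -> darc G (g x) (g y)) ->
  forall x y, connect (end_link G) (g x, ~~ part x) (g y, ~~ part y).
Proof.
move=> Fconn Fh gP x y.
apply: (connect_undirected_map (k := fun z => (g z, ~~ part z))
  (@end_link_csym G) _ (Fconn x y)) => a b ab.
by apply: connect1; have [-> ->] := Fh _ _ ab; rewrite /end_link /= gP.
Qed.

(* A sproink S of T with S -> G yields T -> arc_adjoint G: a vertex u of T is
   sent to the common link class of the ends of the tree F u, and for an arc
   (u, u') the glued vertex vout u u' = vin u u' of S provides the witness. *)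
Lemma sproink_hom_adjoint (T S G : digraph) :
  is_sproink T S -> hom S G -> hom T (arc_adjoint G).
Proof.
case=> F [part [vout [vin]]] /= [Ftree glue_side [q [_ qP SP]]] [g gP].
pose W u := dvert (F u).
pose end_of u (x : W u) := (g (q (Tagged W x)), ~~ part u x).
have ends_linked u x y : connect (end_link G) (end_of u x) (end_of u y).
  have [[_ _ _ _ Fconn] Fh] := Ftree u.
  apply: (height1_ends_linked (g := fun x => g (q (Tagged W x))) Fconn Fh).
  by move=> a b ab; apply/gP/SP; exists u, a, b.
have inhabited u : exists x : W u, true.
  by have [[_ _ /card_gt0P [x _] _ _] _] := Ftree u; exists x.
pose x0 u := xchoose (inhabited u).
exists (fun u => end_of u (x0 u)) => u u' uu'.
have glued : q (Tagged W (vout u u')) = q (Tagged W (vin u u')).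
  apply/qP/connect1/existsP; exists u; apply/existsP; exists u'.
  by rewrite uu' !eqxx.
have [out_side in_side] := glue_side u u' uu'.
apply/existsP; exists (g (q (Tagged W (vout u u')))); apply/andP; split.
- by move: (ends_linked u (x0 u) (vout u u')); rewrite /end_of out_side.
- by move: (ends_linked u' (x0 u') (vin u u')); rewrite /end_of in_side glued.
Qed.

(* When
   the sides alternate along the path, every consecutive pair is an arc. *)
Definition zigzag_arc (n : nat) (side : nat -> bool) : rel 'I_n.+1 :=
  fun i j => ((j == i.+1 :> nat) || (i == j.+1 :> nat)) && ~~ side i && side j.
Arguments zigzag_arc : clear implicits.

Definition zigzag (n : nat) (side : nat -> bool) : digraph :=
  Digraph (zigzag_arc n side).

Definition alternating (n : nat) (side : nat -> bool) : Prop :=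
  forall i, i < n -> side i != side i.+1.

Section Zigzag.
Variables (n : nat) (side : nat -> bool).
Hypothesis side_alt : alternating n side.

Let edge (k : 'I_n) : 'I_n.+1 * 'I_n.+1 :=
  if side k then (lift ord0 k, widen_ord (leqnSn n) k)
  else (widen_ord (leqnSn n) k, lift ord0 k).

Let edge_inj : injective edge.
Proof.
have edge_min k : minn (edge k).1 (edge k).2 = k.
  by rewrite /edge; case: (side k); rewrite /= /bump /= add1n ?(minnC k.+1);
    apply/minn_idPl.
by move=> k k' kk'; apply/val_inj; rewrite /= -edge_min kk' edge_min.
Qed.

Lemma zigzag_arc_count :
  #|[pred p : 'I_n.+1 * 'I_n.+1 | zigzag_arc n side p.1 p.2]| = n.
Proof.
rewrite -[n in RHS]card_ord -(card_image edge_inj); apply: eq_card => -[i j].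
rewrite !inE /=; apply/idP/imageP.
- case/andP=> [/andP [/orP [] /eqP ij si sj]].
  + have ilt : i < n by rewrite -ltnS -ij.
    exists (Ordinal ilt) => //; rewrite /edge /= (negbTE si).
    by congr pair; apply/val_inj; rewrite /= ?ij /bump /= ?add1n.
  + have jlt : j < n by rewrite -ltnS -ij.
    exists (Ordinal jlt) => //; rewrite /edge /= sj.
    by congr pair; apply/val_inj; rewrite /= ?ij /bump /= ?add1n.
- move=> [k _]; have := side_alt (ltn_ord k); rewrite /edge.
  case sk: (side k) => alt [-> ->];
    rewrite /zigzag_arc /= /bump /= add1n eqxx ?orbT sk /=;
    by case: (side k.+1) alt.
Qed.

Lemma zigzag_connected (x y : 'I_n.+1) :
  connect [rel a b | zigzag_arc n side a b || zigzag_arc n side b a] x y.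
Proof.
set R := SimplRel _.
have R_sym : connect_sym R by apply: sym_connect_sym => a b; rewrite /R /= orbC.
have from0 m (mlt : m < n.+1) : connect R ord0 (Ordinal mlt).
  elim: m mlt => [|m IH] mlt; first by rewrite (_ : Ordinal mlt = ord0) //; apply/val_inj.
  apply: connect_trans (IH (ltnW mlt)) (connect1 _).
  have := side_alt mlt; rewrite /R /= /zigzag_arc /= eqxx orbT.
  by case: (side m) (side m.+1) => [] [].
apply: (connect_trans (y := ord0)); last by case: y => y ylt; apply: from0.
by rewrite R_sym; case: x => x xlt; apply: from0.
Qed.

Lemma zigzag_tree :
  oriented_tree (zigzag n side) /\ height_le1 (fun i : dvert (zigzag n side) => side i).
Proof.
split=> [|x y /andP [/andP [_ /negbTE -> ->]] //].
split; rewrite /= ?card_ord.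
- by move=> x; rewrite /zigzag_arc; case: (side x); rewrite ?andbF.
- by move=> x y /andP [/andP [_ /negbTE sx] _]; rewrite /zigzag_arc sx andbF.
- by [].
- exact: zigzag_arc_count.
- exact: zigzag_connected.
Qed.

End Zigzag.

Lemma covering_walk (A : finType) (e : rel A) (a : A) (L : seq A) :
  connect_sym e -> (forall c, c \in L -> connect e a c) ->
  exists s, path e a s && all (mem (a :: s)) L.
Proof.
move=> e_sym; elim: L => [|c L IH] aL; first by exists [::].
have [s /andP [sP sL]] : exists s, path e a s && all (mem (a :: s)) L.
  by apply: IH => c' c'L; apply: aL; rewrite inE c'L orbT.
have /connectP [p pP ->] : connect e (last a s) c.
  apply: connect_trans (aL c (mem_head _ _)).
  by rewrite e_sym; apply: (path_connect sP); apply: mem_last.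
exists (s ++ p); rewrite cat_path sP pP /= -last_cat mem_last /=.
by apply: sub_all sL => b; rewrite /= !inE mem_cat => /orP [->|->]; rewrite ?orbT.
Qed.

Section ClassWalk.
Variables (G : digraph) (d : dvert G * bool).

Lemma class_walk_exists :
  exists s, path (end_link G) d s && all (mem (d :: s)) (enum (connect (end_link G) d)).
Proof.
by apply: covering_walk; [apply: end_link_csym | move=> c; rewrite mem_enum].
Qed.

Definition class_walk : seq (dvert G * bool) := xchoose class_walk_exists.

(* The i-th end visited, and the side it gives to the i-th zigzag vertex:
   heads become sources (side false), tails become targets (side true). *)
Definition walk_end (i : nat) : dvert G * bool := nth d (d :: class_walk) i.

Definition walk_side (i : nat) : bool := ~~ (walk_end i).2.

Lemma walk_step i : i < size class_walk -> end_link G (walk_end i) (walk_end i.+1).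
Proof. by have /andP [/(pathP d) walkP _] := xchooseP class_walk_exists; apply: walkP. Qed.

Lemma walk_side_alt : alternating (size class_walk) walk_side.
Proof.
move=> i /walk_step /end_link_side; rewrite /walk_side.
by case: (walk_end i).2; case: (walk_end i.+1).2.
Qed.

Lemma walk_arc (i j : 'I_(size class_walk).+1) :
  zigzag_arc _ walk_side i j -> darc G (walk_end i).1 (walk_end j).1.
Proof.
rewrite /zigzag_arc /walk_side negbK => /andP [/andP [/orP [] /eqP ij hi tj]].
- by apply: end_link_arc hi tj; rewrite ij; apply: walk_step; rewrite -ltnS -ij.
- apply: end_link_arc hi tj; rewrite end_link_sym ij.
  by apply: walk_step; rewrite -ltnS -ij.
Qed.

Definition walk_index (c : dvert G * bool) : 'I_(size class_walk).+1 :=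
  inord (index c (d :: class_walk)).

Lemma walk_indexK c : connect (end_link G) d c -> walk_end (walk_index c) = c.
Proof.
move=> dc; have /andP [_ /allP visits] := xchooseP class_walk_exists.
have c_in : c \in d :: class_walk by apply: visits; rewrite mem_enum.
rewrite /walk_end inordK ?nth_index //.
by have := index_mem c (d :: class_walk); rewrite c_in.
Qed.

End ClassWalk.

Definition glue_rel (T : digraph) (F : dvert T -> digraph)
    (vout : forall u u' : dvert T, dvert (F u))
    (vin : forall u u' : dvert T, dvert (F u')) : rel {u : dvert T & dvert (F u)} :=
  let W := fun u => dvert (F u) in
  fun p q => [exists u, exists u',
    darc T u u' &&
    (((p == Tagged W (vout u u')) && (q == Tagged W (vin u u'))) ||
     ((q == Tagged W (vout u u')) && (p == Tagged W (vin u u'))))].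

(* Gluing trees of height at most one along T really produces a sproink of T
   (realised as the set of class representatives of the gluing), and vertex
   maps of the trees into G that preserve arcs and agree on glued vertices
   induce a homomorphism from that sproink to G. *)
Lemma glued_sproink (T G : digraph) (F : dvert T -> digraph)
    (part : forall u, dvert (F u) -> bool)
    (vout : forall u u' : dvert T, dvert (F u))
    (vin : forall u u' : dvert T, dvert (F u'))
    (g : forall u, dvert (F u) -> dvert G) :
  (forall u, oriented_tree (F u) /\ height_le1 (part u)) ->
  (forall u u', darc T u u' ->
     part u (vout u u') = true /\ part u' (vin u u') = false) ->
  (forall u u', darc T u u' -> g u (vout u u') = g u' (vin u u')) ->
  (forall u x y, darc (F u) x y -> darc G (g u x) (g u y)) ->
  exists S, is_sproink T S /\ hom S G.
Proof.
move=> Ftree glue_side g_glue gP.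
pose W u := dvert (F u); pose glue := glue_rel vout vin.
have glue_sym : connect_sym glue.
  apply: sym_connect_sym => p q; apply: eq_existsb => u; apply: eq_existsb => u'.
  by rewrite orbC.
pose V := {p : {u & W u} | root glue p == p}.
pose cls p : V := exist _ (root glue p) (introT eqP (root_root glue_sym p)).
pose arcS : rel V := fun a b => [exists u, [exists x : W u, [exists y : W u,
  darc (F u) x y && (cls (Tagged W x) == a) && (cls (Tagged W y) == b)]]].
pose gt (p : {u & W u}) := g (tag p) (tagged p).
have gt_root p : gt (root glue p) = gt p.
  apply/esym/(connect_invariant (k := gt)); last exact: connect_root.
  move=> _ _ /existsP [u /existsP [u' /andP [uu' /orP [] /andP [/eqP -> /eqP ->]]]];
  by rewrite /gt /= g_glue.
exists (Digraph arcS); split; last first.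
  exists (fun a : V => gt (val a)) => a b.
  move=> /existsP [u /existsP [x /existsP [y /andP [/andP [xy /eqP <-] /eqP <-]]]].
  by rewrite /= !gt_root; apply: gP.
exists F, part, vout, vin; split=> //; exists cls; split.
- by move=> [p pP]; exists p; apply/val_inj/eqP.
- move=> p p'; split=> [/(congr1 val) /(rootP glue_sym) // | pp'].
  exact/val_inj/(rootP glue_sym).
- move=> a b; split.
    move=> /existsP [u /existsP [x /existsP [y /andP [/andP [xy /eqP <-] /eqP <-]]]].
    by exists u, x, y.
  move=> [u [x [y [xy [<- <-]]]]].
  apply/existsP; exists u; apply/existsP; exists x; apply/existsP; exists y.
  by rewrite xy !eqxx.
Qed.

Definition adjoint_witness (G : digraph) (a b : dvert G * bool) : dvert G :=
  odflt a.1 [pick z | connect (end_link G) a (z, false) &&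
                      connect (end_link G) b (z, true)].

Lemma adjoint_witnessP (G : digraph) (a b : dvert G * bool) :
  end_arc G a b ->
  connect (end_link G) a (adjoint_witness a b, false) &&
  connect (end_link G) b (adjoint_witness a b, true).
Proof.
move/existsP=> [z zP]; rewrite /adjoint_witness.
by case: pickP => [z' -> // | /(_ z)]; rewrite zP.
Qed.

(* Conversely, T -> arc_adjoint G yields a sproink S of T with S -> G: the tree
   of a vertex u is the zigzag path along a walk through the link class of its
   image, and an arc (u, u') glues the visit of the tail end of its witness in
   the walk of u to the visit of the head end in the walk of u'. *)
Lemma adjoint_hom_sproink (T G : digraph) :
  hom T (arc_adjoint G) -> exists S, is_sproink T S /\ hom S G.
Proof.
case=> h hP; pose w u u' := adjoint_witness (h u) (h u').
have out_end u u' : darc T u u' ->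
    walk_end (h u) (walk_index (h u) (w u u', false)) = (w u u', false).
  by move=> /hP /adjoint_witnessP /andP [wP _]; apply: walk_indexK.
have in_end u u' : darc T u u' ->
    walk_end (h u') (walk_index (h u') (w u u', true)) = (w u u', true).
  by move=> /hP /adjoint_witnessP /andP [_ wP]; apply: walk_indexK.
apply: (glued_sproink (F := fun u => zigzag _ (walk_side (h u)))
  (part := fun u i => walk_side (h u) i)
  (vout := fun u u' => walk_index (h u) (w u u', false))
  (vin := fun u u' => walk_index (h u') (w u u', true))
  (g := fun u i => (walk_end (h u) i).1)).
- by move=> u; apply/zigzag_tree/walk_side_alt.
- by move=> u u' uu'; rewrite /walk_side out_end // in_end.
- by move=> u u' uu'; rewrite out_end // in_end.
- by move=> u x y; apply: walk_arc.
Qed.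

Theorem theorem2p3 (Fs : digraph -> Prop) (H : digraph) :
  (forall T, Fs T -> oriented_tree T) ->
  complete_obstructions Fs H ->
  complete_obstructions (Sproinks Fs) (arc_graph H).
Proof.
move=> _ Fs_obs G; split.
- move=> /arc_adjunction /Fs_obs no_tree [S [[T [FsT sproinkS]] SG]].
  by apply: no_tree; exists T; split=> //; apply: sproink_hom_adjoint sproinkS SG.
- move=> no_sproink; apply/arc_adjunction/Fs_obs => -[T [FsT TG]].
  have [S [sproinkS SG]] := adjoint_hom_sproink TG.
  by apply: no_sproink; exists S; split=> //; exists T.
Qed.
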